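(* In a public goods economy (as in the context), let $\mathbf{a}$ be an outcome and suppose there is a path $P$ of outcomes with endpoints $\mathbf{x},\mathbf{y}$ such that $\mathbf{u}(\mathbf{p})\le\mathbf{u}(\mathbf{a})$ for every $\mathbf{p}\in P$. If $\mathbf{a}'$ is a deviation from $\mathbf{a}$ for some coalition $C$ satisfying $\mathbf{a}'\lneq\mathbf{x}$, then $\mathbf{a}'$ also satisfies $\mathbf{a}'\lneq\mathbf{y}$.
   Context: Agents $N=\{1,\dots,n\}$; outcomes are vectors in $[0,1]^n$. Vector orderings: $\mathbf{x}\ge\mathbf{y}$ means $x_i\ge y_i$ for all $i$; $\mathbf{x}>\mathbf{y}$ means $x_i>y_i$ for all $i$; $\mathbf{x}\gneq\mathbf{y}$ means $\mathbf{x}\ge\mathbf{y}$ and $x_j>y_j$ for some $j$ ($\mathbf{x}\lneq\mathbf{y}$ means $\mathbf{y}\gneq\mathbf{x}$). For $C\subseteq N$, $\mathbf{v}_C$ is the restriction of $\mathbf{v}$ to coordinates in $C$. The utility function $\mathbf{u}:[0,1]^n\to[0,1]^n$ is continuous, concave, and has positive externalities: whenever $\mathbf{a}\gneq\mathbf{a}'$ and $a_i=a'_i$, then $u_i(\mathbf{a})>u_i(\mathbf{a}')$. A coalition is a nonempty $C\subseteq N$; $\mathbf{a}'$ is a deviation from $\mathbf{a}$ for $C$ if $\mathbf{a}'_{N\setminus C}=\mathbf{0}$ and $\mathbf{u}_C(\mathbf{a}')>\mathbf{u}_C(\mathbf{a})$. A path with endpoints $\mathbf{x},\mathbf{y}$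 is the image of a continuous $f:[0,1]\to[0,1]^n$ with $f(0)=\mathbf{x}$, $f(1)=\mathbf{y}$. *)

From HB Require Import structures.
From mathcomp Require Import all_boot all_order all_algebra.
From mathcomp Require Import all_classical all_reals all_analysis.
Set Implicit Arguments. Unset Strict Implicit. Unset Printing Implicit Defensive.
Import Order.TTheory GRing.Theory Num.Theory.
Import numFieldNormedType.Exports.
Local Open Scope ring_scope.
Local Open Scope classical_set_scope.

(* Outcomes: row vectors 'rV[R]_n; coordinate of agent i (i : 'I_n) is x ord0 i. *)
Section Defs.
Variables (R : realType) (n : nat).
Local Notation vec := 'rV[R]_n.

Definition in_cube (x : vec) : Prop := forall i, 0 <= x ord0 i <= 1.

Definition vge (x y : vec) : Prop := forall i, y ord0 i <= x ord0 i.
Definition vgt (x y : vec) : Prop := forall i, y ord0 i < x ord0 i.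
Definition vgneq (x y : vec) : Prop := vge x y /\ exists j, y ord0 j < x ord0 j.
Definition vlneq (x y : vec) : Prop := vgneq y x.

Definition vgt_on (C : {set 'I_n}) (x y : vec) : Prop :=
  forall i, i \in C -> y ord0 i < x ord0 i.

Definition continuous_on_cube (u : vec -> vec) : Prop :=
  {within [set x | in_cube x], continuous u}.

Definition concave_on_cube (u : vec -> vec) : Prop :=
  forall (a b : vec) (t : R), in_cube a -> in_cube b -> 0 <= t <= 1 ->
    forall i, t * u a ord0 i + (1 - t) * u b ord0 i <=
      u (\row_k (t * a ord0 k + (1 - t) * b ord0 k)) ord0 i.

Definition positive_externalities (u : vec -> vec) : Prop :=
  forall (a a' : vec) (i : 'I_n), in_cube a -> in_cube a' ->
    vgneq a a' -> a ord0 i = a' ord0 i -> u a' ord0 i < u a ord0 i.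

Definition utility (u : vec -> vec) : Prop :=
  (forall x, in_cube x -> in_cube (u x)) /\
  continuous_on_cube u /\ concave_on_cube u /\ positive_externalities u.

Definition deviation (u : vec -> vec) (C : {set 'I_n}) (a a' : vec) : Prop :=
  C != finset.set0 /\ in_cube a' /\ (forall i, i \notin C -> a' ord0 i = 0) /\
  vgt_on C (u a') (u a).

Definition is_path (P : set vec) (x y : vec) : Prop :=
  exists f : R -> vec,
    {within `[0%R, 1%R], continuous f} /\
    (forall t, 0 <= t <= 1 -> in_cube (f t)) /\
    f 0 = x /\ f 1 = y /\ P = f @` `[0%R, 1%R].
End Defs.
Notation vec R n := 'rV[R]_n (only parsing).

From HB Require Import structures.
From mathcomp Require Import all_boot all_order all_algebra.
From mathcomp Require Import all_classical all_reals all_analysis.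
Import Order.TTheory GRing.Theory Num.Theory.
Import numFieldNormedType.Exports.
Local Open Scope ring_scope.
Local Open Scope classical_set_scope.

(** Measure how far a point lies above [a'] on the coalition [C] by the least
  of its coordinate gaps over [C]. Along the path this is a continuous
  function, nonnegative at [x], and positive wherever it is nonnegative: a
  point [p] of the path with [p >= a'] on [C] and [p_i = a'_i] for some [i]
  in [C] satisfies [p >= a'] everywhere (as [a'] is zero off [C]), so either
  [p = a'] or positive externalities give [u_i(a') < u_i(p)]; both contradict
  [u_i(p) <= u_i(a) < u_i(a')]. By the intermediate value theorem the gap
  is then positive at [y]. *)

Set Implicit Arguments. Unset Strict Implicit.

Lemma continuous_bigmin (R : realType) (T : topologicalType) (I : Type)
    (r : seq I) (P : pred I) (F : I -> T -> R) (m : R) :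
  (forall i, continuous (F i)) ->
  continuous (fun t => \big[Order.min/m]_(i <- r | P i) F i t).
Proof.
move=> F_cont; elim: r => [|j r IH].
  under eq_fun do rewrite big_nil.
  exact: cst_continuous.
under eq_fun do rewrite big_cons.
by case: (P j) => // t; exact: (continuous_min (F_cont j t) (IH t)).
Qed.

Lemma continuous_itv_gt0 (R : realType) (g : R -> R) (a b : R) :
  a <= b -> {within `[a, b], continuous g} ->
  {in `[a, b]%R, forall t, 0 <= g t -> 0 < g t} -> 0 <= g a -> 0 < g b.
Proof.
move=> ab g_cont g_pos ga0.
have ga : 0 < g a by apply: g_pos; rewrite // in_itv /= lexx.
rewrite ltNge; apply/negP => gb.
have [|c c_ab gc] := IVT ab g_cont (v := 0).
  by rewrite ge_min le_max gb (ltW ga) orbT.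
by move: (g_pos c c_ab); rewrite gc ltxx lexx => /(_ isT).
Qed.

Section Outcomes.
Variables (R : realType) (n : nat).
Local Notation vec := 'rV[R]_n.
Implicit Types (C : {set 'I_n}) (b p q v : vec).

Definition vge_on C p q : Prop := forall i, i \in C -> q ord0 i <= p ord0 i.

(* Any positive neutral element would do. *)
Definition min_gap C b v : R := \big[Order.min/1]_(i in C) (v ord0 i - b ord0 i).

Lemma continuous_min_gap C b : continuous (min_gap C b).
Proof.
apply: continuous_bigmin => i v.
by apply: continuousB; [exact: coord_continuous | exact: cst_continuous].
Qed.

Lemma min_gap_ge0 C b v : 0 <= min_gap C b v <-> vge_on C v b.
Proof.
split; first by move=> /bigmin_geP[_ gap_ge0] i /gap_ge0; rewrite subr_ge0.
by move=> ge_on; apply/bigmin_geP; split=> // i /ge_on; rewrite subr_ge0.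
Qed.

Lemma min_gap_gt0 C b v : 0 < min_gap C b v <-> vgt_on C v b.
Proof.
split; first by move=> /bigmin_gtP[_ gap_gt0] i /gap_gt0; rewrite subr_gt0.
by move=> gt_on; apply/bigmin_gtP; split=> // i /gt_on; rewrite subr_gt0.
Qed.

Lemma vge_eq_or_vgneq p q : vge p q -> p = q \/ vgneq p q.
Proof.
move=> pq; have [[j qj]|no_gap] := pselect (exists j, q ord0 j < p ord0 j).
  by right; split=> //; exists j.
left; apply/matrixP => r j; rewrite (ord1 r); apply/eqP.
by rewrite eq_le pq andbT leNgt; apply/negP => qj; apply: no_gap; exists j.
Qed.

Lemma vge_of_vge_on C p q : in_cube p ->
  (forall i, i \notin C -> q ord0 i = 0) -> vge_on C p q -> vge p q.
Proof.
move=> p_cube q_out pq i; have [iC|iNC] := boolP (i \in C); first exact: pq.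
by rewrite q_out //; case/andP: (p_cube i).
Qed.

Lemma deviation_vge_on_vgt_on (u : vec -> vec) C a a' p :
  positive_externalities u -> deviation u C a a' -> in_cube p ->
  vge (u a) (u p) -> vge_on C p a' -> vgt_on C p a'.
Proof.
move=> u_pe [_ [a'_cube [a'_out u_gt]]] p_cube up_le pa' i iC.
rewrite lt_def pa' // andbT; apply/eqP => p_i.
have := u_gt i iC; apply/negP; rewrite -leNgt.
have [<-|p_gneq] := vge_eq_or_vgneq (vge_of_vge_on p_cube a'_out pa').
  exact: up_le.
exact: le_trans (ltW (u_pe _ _ _ p_cube a'_cube p_gneq p_i)) (up_le i).
Qed.

End Outcomes.

Theorem lemma2 (R : realType) (n : nat) (u : vec R n -> vec R n)
  (hu : utility u) (a : vec R n) (ha : in_cube a)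
  (P : set (vec R n)) (x y : vec R n) (hP : is_path P x y)
  (hPa : forall p, P p -> vge (u a) (u p))
  (C : {set 'I_n}) (a' : vec R n) (hdev : deviation u C a a')
  (hx : vlneq a' x) :
  vlneq a' y.
Proof.
case: hu => _ [_ [_ u_pe]].
case: hP => f [f_cont [f_cube [f0 [f1 P_def]]]].
have [C_ne [_ [a'_out _]]] := hdev.
case: hx => x_ge _.
have f_cube' t : t \in `[0, 1]%R -> in_cube (f t) by rewrite in_itv; exact: f_cube.
pose g := min_gap C a' \o f.
have g_cont : {within `[0, 1], continuous g}.
  by apply: within_continuous_comp => // v _; exact: continuous_min_gap.
have g_pos : {in `[0, 1]%R, forall t, 0 <= g t -> 0 < g t}.
  move=> t t01 /min_gap_ge0 f_ge; apply/min_gap_gt0.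
  have ft_in_P : P (f t) by rewrite P_def; exists t.
  exact: deviation_vge_on_vgt_on u_pe hdev (f_cube' t t01) (hPa _ ft_in_P) f_ge.
have g0 : 0 <= g 0 by apply/min_gap_ge0 => i _; rewrite /= f0; exact: x_ge.
have /min_gap_gt0 := continuous_itv_gt0 ler01 g_cont g_pos g0.
rewrite /= f1 => y_gt.
have y_cube : in_cube y by rewrite -f1; apply: f_cube'; rewrite in_itv /= ler01 lexx.
split; first exact: vge_of_vge_on y_cube a'_out (fun i iC => ltW (y_gt i iC)).
by case/set0Pn: C_ne => j jC; exists j; exact: y_gt.
Qed.
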